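(* $\mathbb{Y}_{\tt k}\subseteq\Theta_{\tt k}$; that is, for every $w\in S_n^{\tt k}$, the inversion set $\{(a,b)\in\Omega_{GL_n}: w(a)>w(b)\}$ is a ${\tt k}$-diagram.
   Context: Fix $n$ and ${\tt k}=\{k_1<\dots<k_{d-1}\}$ with $0<k_1<\dots<k_{d-1}<n$; set $k_0=0$, $k_d=n$, $I_i=[k_{i-1}+1,k_i]$. $S_n^{\tt k}$ is the set of $w\in S_n$ whose descents lie in ${\tt k}$, and $\mathbb{Y}_{\tt k}$ is the set of their inversion sets. $\Omega_{GL_n}=\{(a,b):1\le a<b\le n\}$ ordered by $(a',b')\preceq(a,b)$ iff $a\le a'$ and $b'\le b$; regions $\Lambda^{ij}_{\tt k}=I_i\times I_j$ for $i<j$. $S\subseteq\Omega_{GL_n}$ is a ${\tt k}$-diagram if $S\cap\Lambda^{ij}_{\tt k}$ is a lower order ideal of $\Lambda^{ij}_{\tt k}$ for every $i<j$, and for each $(a,b)$, with hook $H(a,b)=\{(a,l):a<l<b\}\cup\{(j,b):a<j<b\}$: if more than half of $H(a,b)$ lies in $S$ then $(a,b)\in S$, and if more than half lies outside $S$ then $(a,b)\notin S$. $\Theta_{\tt k}$ is the set of ${\tt k}$-diagrams. *)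

From mathcomp Require Import all_boot all_fingroup.
Set Implicit Arguments. Unset Strict Implicit. Unset Printing Implicit Defensive.

(* Positions and values are 1-based naturals in [1, n], as in the paper. *)

(* w(a) for a permutation w of 'I_n, in 1-based convention (0 if a out of range). *)
Definition pval (n : nat) (w : 'S_n) (a : nat) : nat :=
  match @insub nat (fun x => x < n) _ a.-1 with
  | Some i => (w i).+1
  | None => 0
  end.

Definition Omega (n a b : nat) : bool := [&& 1 <= a, a < b & b <= n].

Definition prec (a' b' a b : nat) : bool := (a <= a') && (b' <= b).

(* k = [:: k_1; ...; k_{d-1}], with 0 < k_1 < ... < k_{d-1} < n *)
Definition valid_k (n : nat) (k : seq nat) : Prop :=
  sorted ltn k /\ all (fun x => 0 < x < n) k.

(* the full list k_0 = 0, k_1, ..., k_{d-1}, k_d = n ; d = size k + 1 *)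
Definition kfull (n : nat) (k : seq nat) : seq nat := 0 :: rcons k n.
Definition kd (k : seq nat) : nat := (size k).+1.
Definition kk (n : nat) (k : seq nat) (i : nat) : nat := nth 0 (kfull n k) i.

Definition inblock (n : nat) (k : seq nat) (i x : nat) : bool :=
  (kk n k i.-1 < x) && (x <= kk n k i).

Definition descents_in (n : nat) (k : seq nat) (w : 'S_n) : Prop :=
  forall i, 1 <= i < n -> pval w i.+1 < pval w i -> i \in k.

Definition inv_set (n : nat) (w : 'S_n) (a b : nat) : bool :=
  Omega n a b && (pval w b < pval w a).

(* hook H(a,b): number of its elements in S and outside S *)
Definition hook_in (S : nat -> nat -> bool) (a b : nat) : nat :=
  \sum_(a.+1 <= l < b) (S a l : nat) + \sum_(a.+1 <= j < b) (S j b : nat).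
Definition hook_out (S : nat -> nat -> bool) (a b : nat) : nat :=
  \sum_(a.+1 <= l < b) (~~ S a l : nat) + \sum_(a.+1 <= j < b) (~~ S j b : nat).

Definition k_diagram (n : nat) (k : seq nat) (S : nat -> nat -> bool) : Prop :=
  [/\ (forall a b, S a b -> Omega n a b),
      (* S ∩ Λ^{ij} is a lower order ideal of Λ^{ij} = I_i × I_j, i < j *)
      (forall i j, 1 <= i -> i < j -> j <= kd k ->
         forall a b a' b',
           inblock n k i a -> inblock n k j b ->
           inblock n k i a' -> inblock n k j b' ->
           S a b -> prec a' b' a b -> S a' b')
    &
      (forall a b, Omega n a b ->
         (hook_in S a b + hook_out S a b < 2 * hook_in S a b -> S a b) /\
         (hook_in S a b + hook_out S a b < 2 * hook_out S a b -> ~~ S a b))].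

From Pilot Require Import Defs.
From mathcomp Require Import all_boot all_fingroup.
From mathcomp Require Import zify.

Set Implicit Arguments.
Unset Strict Implicit.
Unset Printing Implicit Defensive.

(* Within a block no position is a descent, so w increases on each block; the
   lower-ideal condition on I_i x I_j follows since all of I_i lies left of I_j.
   Inversion sets are transitive and cotransitive: for a < l < b, (a,l) and (l,b)
   in the set force (a,b) in it, and likewise for the complement.  Hence, if
   (a,b) is not an inversion, each l contributes at most one of (a,l), (l,b) to
   the hook, so at most half of H(a,b) lies in the set; dually when it is. *)

Section Blocks.

Variables (n : nat) (k : seq nat).
Hypothesis kP : valid_k n k.

Lemma sorted_kfull : sorted leq (kfull n k).
Proof.
case: kP => /(sub_sorted ltnW) k_sorted /allP k_range.
rewrite /kfull /= rcons_path; apply/andP; split; first by case: k k_sorted {k_range}.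
by have := mem_last 0 k; rewrite inE => /predU1P[-> // | /k_range /andP[_ /ltnW]].
Qed.

Lemma kk_le p q : p <= q -> q <= kd k -> kk n k p <= kk n k q.
Proof.
move=> pq qd; apply: (sorted_leq_nth leq_trans leqnn 0 sorted_kfull) => //;
  rewrite inE /kfull /= size_rcons ltnS //; exact: leq_trans qd.
Qed.

Lemma kk_kd : kk n k (kd k) = n.
Proof. by rewrite /kk /kfull /kd /= nth_rcons ltnn eqxx. Qed.

Lemma kk_pos_le_kd i : 0 < kk n k i -> i <= kd k.
Proof.
apply: contraTT; rewrite -ltnNge => kd_lt.
by rewrite /kk nth_default // /kfull /= size_rcons.
Qed.

Lemma inblock_range i x : inblock n k i x -> [/\ 0 < i, i <= kd k & 0 < x <= n].
Proof.
case/andP=> lo hi.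
have i_le : i <= kd k by apply: kk_pos_le_kd; lia.
have i_gt0 : 0 < i by move: lo hi; case: i {i_le} => //; rewrite /kk /=; lia.
have : kk n k i <= kk n k (kd k) by exact: kk_le.
by rewrite kk_kd i_gt0 i_le; split=> //; lia.
Qed.

Lemma inblock_lt i j a b : i < j -> inblock n k i a -> inblock n k j b -> a < b.
Proof.
move=> ij /[dup] /inblock_range[_ id _] /andP[_ a_le].
move=> /[dup] /inblock_range[_ jd _] /andP[b_gt _].
have : kk n k i <= kk n k j.-1 by apply: kk_le; lia.
lia.
Qed.

Lemma notin_k_interior i x : kk n k i.-1 < x < kk n k i -> x \notin k.
Proof.
case/andP=> lo hi; apply/negP=> /(nthP 0) [m mk xE].
have kk_x : kk n k m.+1 = x by rewrite /kk /kfull /= nth_rcons mk xE.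
have md : m.+1 <= kd k by rewrite /kd ltnS ltnW.
case: (leqP m.+1 i.-1) => [le_mi | lt_im].
  have i_le : i <= kd k by apply: kk_pos_le_kd; lia.
  have : kk n k m.+1 <= kk n k i.-1 by apply: kk_le; lia.
  lia.
have : kk n k i <= kk n k m.+1 by apply: kk_le; lia.
lia.
Qed.

Lemma pval_block_mono (w : 'S_n) i : descents_in k w ->
  {in inblock n k i &, {homo Defs.pval w : a b / a <= b}}.
Proof.
move=> desc; apply: homo_leq_in => [//|y x z|a b|a].
- exact: leq_trans.
- by move=> + + c; rewrite !unfold_in /inblock; lia.
rewrite !unfold_in => /[dup] /inblock_range[_ _ /andP[a_gt0 _]] /andP[lo _].
move=> /[dup] /inblock_range[_ _ /andP[_ a_lt]] /andP[_ hi].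
rewrite leqNgt; apply/negP => /(desc a) a_in_k.
have : a \notin k by apply: (@notin_k_interior i); lia.
by rewrite a_in_k //; lia.
Qed.

End Blocks.

Lemma hook_in_out (S : nat -> nat -> bool) a b :
  hook_in S a b + hook_out S a b = 2 * (b - a.+1).
Proof.
have split_count (f : nat -> bool) :
    \sum_(a.+1 <= l < b) (f l : nat) + \sum_(a.+1 <= l < b) (~~ f l : nat) = b - a.+1.
  rewrite -big_split /= (eq_bigr (fun _ => 1)) ?sum_nat_const_nat ?muln1 //.
  by move=> l _; case: (f l).
rewrite /hook_in /hook_out.
have := split_count (S a); have := split_count (fun j => S j b); lia.
Qed.

Lemma hook_in_majority (S : nat -> nat -> bool) a b :
  (forall l, a < l < b -> S a l -> S l b -> S a b) ->
  b - a.+1 < hook_in S a b -> S a b.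
Proof.
move=> S_trans; apply: contraTT => S'ab; rewrite -leqNgt /hook_in -big_split /=.
rewrite -[X in _ <= X]muln1 -sum_nat_const_nat big_seq [X in _ <= X]big_seq.
apply: leq_sum => l; rewrite mem_index_iota => /S_trans.
by case: (S a l) (S l b) => [] [] // /(_ isT isT); rewrite (negbTE S'ab).
Qed.

Lemma inv_set_trans n (w : 'S_n) a l b : a < l < b -> Omega n a b ->
  inv_set w a l -> inv_set w l b -> inv_set w a b.
Proof.
rewrite /inv_set => _ -> /andP[_ wla] /andP[_ wbl]; exact: ltn_trans wbl wla.
Qed.

Lemma inv_set_cotrans n (w : 'S_n) a l b : a < l < b -> Omega n a b ->
  ~~ inv_set w a l -> ~~ inv_set w l b -> ~~ inv_set w a b.
Proof.
move=> alb ab; have al : Omega n a l by move: ab; rewrite /Omega; lia.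
have lb : Omega n l b by move: ab; rewrite /Omega; lia.
by rewrite /inv_set ab al lb /= -!leqNgt; exact: leq_trans.
Qed.

Theorem claim2p4 (n : nat) (k : seq nat) (w : 'S_n) :
  valid_k n k -> descents_in k w -> k_diagram n k (inv_set w).
Proof.
move=> kP desc; split=> [a b /andP[] //|i j _ ij _ a b a' b'|a b ab].
- move=> Ia Ib Ia' Ib' /andP[_ wba] /andP[aa' b'b].
  have [_ _ /andP[a'_gt0 _]] := inblock_range kP Ia'.
  have [_ _ /andP[_ b'_le]] := inblock_range kP Ib'.
  rewrite /inv_set /Omega a'_gt0 b'_le (inblock_lt kP ij Ia' Ib') /=.
  have wb'b := pval_block_mono kP desc Ib' Ib b'b.
  have waa' := pval_block_mono kP desc Ia Ia' aa'.
  exact: leq_ltn_trans wb'b (leq_trans wba waa').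
- have hook_size := hook_in_out (inv_set w) a b; split=> majority.
  + by apply: hook_in_majority => [l alb|]; [exact: inv_set_trans | lia].
  + have out_majority : b - a.+1 < hook_out (inv_set w) a b by lia.
    apply: (hook_in_majority (S := fun x y => ~~ inv_set w x y) _ out_majority).
    by move=> l alb; exact: inv_set_cotrans.
Qed.
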